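(* (1) There exists an infinite family of connected subcubic graphs $G$, each containing a pair of open twins of degree $1$, such that $\gamma^{LD}(G)>\frac{n(G)}{2}$. (2) There exists an infinite family of connected subcubic graphs $G$, each containing a pair of open twins of degree $2$, such that $\gamma^{LD}(G)>\frac{n(G)}{2}$.
   Context: All graphs are finite and simple; $n(G)$ is the number of vertices. A graph is subcubic if every vertex has degree at most $3$. Two distinct vertices $u,v$ are open twins of degree $d$ if $N(u)=N(v)$ and $|N(u)|=d$. For $S\subseteq V(G)$, $I(v)=N[v]\cap S$. A set $S$ is locating-dominating if every vertex $v$ has $I(v)\ne\emptyset$ and $I(u)\neq I(v)$ for all distinct $u,v\in V(G)\setminus S$. $\gamma^{LD}(G)$ denotes the minimum size of a locating-dominating set of $G$. *)

From mathcomp Require Import all_boot.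
Set Implicit Arguments. Unset Strict Implicit. Unset Printing Implicit Defensive.

(* A finite simple graph on the finite vertex type T, given by an adjacency
   relation e that is symmetric and irreflexive. n(G) = #|T|. *)
Definition simple_graph (T : finType) (e : rel T) : Prop :=
  symmetric e /\ irreflexive e.

Section Graphs.
Variables (T : finType) (e : rel T).

Definition onbhd (v : T) : {set T} := [set u | e v u].
Definition cnbhd (v : T) : {set T} := v |: onbhd v.

Definition subcubic : Prop := forall v, #|onbhd v| <= 3.

Definition connected_graph : Prop := forall u v, connect e u v.

Definition open_twins (d : nat) (u v : T) : Prop :=
  u != v /\ onbhd u = onbhd v /\ #|onbhd u| = d.

Definition Iset (S : {set T}) (v : T) : {set T} := cnbhd v :&: S.

Definition locating_dominatingb (S : {set T}) : bool :=
  [forall v, Iset S v != set0] &&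
  [forall u, forall v, (u \notin S) ==> (v \notin S) ==> (u != v) ==>
                        (Iset S u != Iset S v)].

(* gamma^LD(G): size of a minimum locating-dominating set
   (V(G) itself is always locating-dominating, so the arg min is well defined). *)
Definition gammaLD : nat :=
  #|[arg min_(S < [set: T] | locating_dominatingb S) #|S|]|.

End Graphs.

From mathcomp Require Import all_boot zify.
Set Implicit Arguments. Unset Strict Implicit. Unset Printing Implicit Defensive.

(* Glue a comb to a small base graph G: a spine path of k+1 vertices, each
   carrying a pendant tooth, with the first spine vertex joined to a hub c of G.
   Every tooth must be dominated, so a locating-dominating set S contains at
   least k+1 comb vertices; and since vertices of G other than c see nothing of
   the comb, the trace of S on G still dominates and locates them, so it has at
   least m vertices when every such "locating-dominating set off c" of G does.
   Hence 2 gamma^LD >= 2m + 2(k+1) > |G| + 2(k+1) = n as soon as |G| < 2m.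
   Open twins of G away from c stay open twins of the same degree. The base
   graphs are the path P3 with its two leaves as twins (m = 2) and the 4-cycle
   with a pendant vertex, whose two non-adjacent degree-2 vertices are twins
   (m = 3). *)

Lemma card_set3_le (T : finType) (a b d : T) : #|[set a; b; d]| <= 3.
Proof.
by apply: leq_trans (leq_card_setU _ _).1 _; rewrite cards1 cards2; case: (_ != _).
Qed.

Lemma card_set_count (T : finType) (s : seq T) (A : {set T}) :
  uniq s -> (forall x, x \in s) -> #|A| = count (mem A) s.
Proof.
move=> s_uniq s_full; rewrite cardE -size_filter.
apply/perm_size/uniq_perm; rewrite ?enum_uniq ?filter_uniq // => x.
by rewrite mem_enum mem_filter s_full andbT.
Qed.

Section LocatingDomination.
Variables (T : finType) (e : rel T).

Lemma connected_from_hub (c : T) :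
  symmetric e -> (forall x, connect e c x) -> connected_graph e.
Proof.
move=> e_sym c_conn x y; apply: connect_trans (c_conn y).
by rewrite (sym_connect_sym e_sym).
Qed.

Lemma mem_Iset (A : {set T}) a t :
  (t \in Iset e A a) = (t \in A) && ((t == a) || e a t).
Proof. by rewrite !inE andbC. Qed.

Lemma locating_dominating_setT : locating_dominatingb e setT.
Proof.
apply/andP; split; apply/forallP => v.
  by apply/set0Pn; exists v; rewrite mem_Iset in_setT eqxx.
by apply/forallP => w; rewrite in_setT.
Qed.

Lemma gammaLD_ge m :
  (forall S, locating_dominatingb e S -> m <= #|S|) -> m <= gammaLD e.
Proof.
rewrite /gammaLD => ld_ge.
by case: arg_minnP => [|S /ld_ge //]; apply: locating_dominating_setT.
Qed.

Definition locating_dominating_off (c : T) (A : {set T}) : Prop :=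
  (forall a, a != c -> Iset e A a != set0) /\
  (forall a b, a != c -> b != c -> a \notin A -> b \notin A -> a != b ->
     Iset e A a != Iset e A b).

Variables (c : T) (A : {set T}).
Hypothesis A_ld : locating_dominating_off c A.

Lemma ldo_dominated a : a != c -> exists2 t, t \in A & (t == a) || e a t.
Proof.
move=> ac; have /set0Pn[t] := A_ld.1 a ac.
by rewrite mem_Iset => /andP[]; exists t.
Qed.

Lemma ldo_separated a b : a != c -> b != c -> a != b -> a \notin A -> b \notin A ->
  exists2 t, t \in A & ((t == a) || e a t) != ((t == b) || e b t).
Proof.
move=> ac bc ab aA bA; apply/exists_inP; apply: contraR (A_ld.2 a b ac bc aA bA ab).
move/exists_inPn => same; apply/eqP/setP => t; rewrite !mem_Iset.
by case tA: (t \in A) => //; apply/eqP/negbNE/same.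
Qed.

Lemma ldo_twins u v : u != c -> v != c -> u != v -> onbhd e u = onbhd e v ->
  (u \in A) || (v \in A).
Proof.
move=> uc vc uv same_nbhd; apply/norP => -[uA vA].
have [t tA] := ldo_separated uc vc uv uA vA.
have := same_nbhd => /setP/(_ t); rewrite !inE => ->.
have tu : t != u by apply: contraNneq uA => <-.
have tv : t != v by apply: contraNneq vA => <-.
by rewrite (negbTE tu) (negbTE tv) eqxx.
Qed.

End LocatingDomination.

Section Comb.
Variables (G : finType) (eg : rel G) (c : G) (k : nat).

Definition comb_vertex : finType := (G + 'I_k.+1 * bool)%type.

Local Notation spine i := (@inr G _ (i, true)).
Local Notation tooth i := (@inr G _ (i, false)).

Definition comb_rel : rel comb_vertex := fun a b =>
  match a, b with
  | inl x, inl y => eg x y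
  | inl x, inr (i, s) | inr (i, s), inl x => [&& x == c, s & i == 0 :> nat]
  | inr (i, s), inr (j, s') => (i == j) && (s != s') ||
      [&& s, s' & (i == j.+1 :> nat) || (j == i.+1 :> nat)]
  end.

Lemma comb_sym : symmetric eg -> symmetric comb_rel.
Proof.
move=> eg_sym [x|[i s]] [y|[j s']] //=.
by rewrite [j == i]eq_sym; case: s s' => [] [] //=; rewrite andbF /= orbC.
Qed.

Lemma comb_irr : irreflexive eg -> irreflexive comb_rel.
Proof.
move=> eg_irr [x|[i s]] /=; first exact: eg_irr.
by rewrite eqxx /= orbb ltn_eqF // !andbF; case: s.
Qed.

Lemma card_comb : #|comb_vertex| = #|G| + (k.+1).*2.
Proof. by rewrite card_sum card_prod card_ord card_bool muln2. Qed.

Lemma connect_hub_spine i : connect comb_rel (inl c) (spine i).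
Proof.
case: i => n; elim: n => [|n IHn] n_lt; first by apply: connect1; rewrite /= !eqxx.
by apply: connect_trans (IHn (ltnW n_lt)) (connect1 _); rewrite /= eqxx !orbT.
Qed.

Lemma comb_connected : simple_graph eg -> connected_graph eg ->
  connected_graph comb_rel.
Proof.
move=> [eg_sym _] eg_conn.
apply: (connected_from_hub (c := inl c)) (comb_sym eg_sym) _ => -[x|[i [|]]].
- have /connectP[p p_path ->] := eg_conn c x.
  by apply/connectP; exists (map inl p); rewrite ?path_map ?last_map.
- exact: connect_hub_spine.
- by apply: connect_trans (connect_hub_spine i) (connect1 _); rewrite /= eqxx.
Qed.

Lemma onbhd_comb_inl x : onbhd comb_rel (inl x) =
  inl @: onbhd eg x :|: (if x == c then [set spine ord0] else set0).
Proof.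
apply/setP => -[y|[i s]]; rewrite !inE /=.
  rewrite mem_imset ?inE; last exact: inl_inj.
  by case: (x == c); rewrite ?inE ?orbF.
have -> : (inr (i, s) \in inl @: onbhd eg x) = false by apply/imsetP => -[].
case: (x == c); rewrite ?inE //=.
by rewrite (inj_eq inr_inj) xpair_eqE andbC; case: s.
Qed.

Lemma comb_deg_inl x : #|onbhd comb_rel (inl x)| <= #|onbhd eg x| + (x == c).
Proof.
rewrite onbhd_comb_inl; apply: leq_trans (leq_card_setU _ _).1 _.
by rewrite card_imset; last exact: inl_inj; case: (x == c); rewrite ?cards1 ?cards0.
Qed.

Lemma onbhd_comb_tooth i : onbhd comb_rel (tooth i) = [set spine i].
Proof.
apply/setP => -[y|[j s]]; rewrite !inE /= ?andbF // orbF.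
by rewrite (inj_eq inr_inj) xpair_eqE; case: s; rewrite /= ?andbT ?andbF // eq_sym.
Qed.

Lemma comb_deg_spine i : #|onbhd comb_rel (spine i)| <= 3.
Proof.
pose prev : comb_vertex := if i == 0 :> nat then inl c else spine (insubd i i.-1).
apply: leq_trans (card_set3_le (tooth i) (spine (insubd i i.+1)) prev).
apply/subset_leq_card/subsetP => -[y|[j s]]; rewrite !inE /=.
  by case/andP => /eqP -> i0; rewrite /prev i0.
case/orP => [/andP[/eqP <-]|/andP[-> /orP[/eqP ij|/eqP ji]]].
- by case: s => // _; rewrite eqxx.
- apply/orP; right; rewrite /prev ij /=.
  by rewrite (inj_eq inr_inj) xpair_eqE -val_eqE val_insubd /= ltn_ord !eqxx.
- apply/orP; left; apply/orP; right.
  by rewrite (inj_eq inr_inj) xpair_eqE -val_eqE val_insubd -ji ltn_ord !eqxx.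
Qed.

Lemma comb_subcubic :
  (forall x, #|onbhd eg x| + (x == c) <= 3) -> subcubic comb_rel.
Proof.
move=> eg_deg [x|[i [|]]].
- exact: leq_trans (comb_deg_inl x) (eg_deg x).
- exact: comb_deg_spine.
- by rewrite onbhd_comb_tooth cards1.
Qed.

Definition base_part (S : {set comb_vertex}) : {set G} := [set x | inl x \in S].
Definition comb_part (S : {set comb_vertex}) : {set 'I_k.+1 * bool} :=
  [set p | inr p \in S].

Lemma card_comb_split S : #|base_part S| + #|comb_part S| <= #|S|.
Proof.
rewrite -(card_imset _ (@inl_inj G ('I_k.+1 * bool))).
rewrite -(card_imset _ (@inr_inj G ('I_k.+1 * bool))) -cardsUI.
have -> : inl @: base_part S :&: inr @: comb_part S = set0.
  by apply/setP => t; rewrite !inE; apply/andP => -[/imsetP[x _ ->] /imsetP[]].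
rewrite cards0 addn0; apply/subset_leq_card/subsetP => t.
by case/setUP => /imsetP[x]; rewrite inE => xS ->.
Qed.

Lemma Iset_comb_inl S x : x != c ->
  Iset comb_rel S (inl x) = inl @: Iset eg (base_part S) x.
Proof.
move=> xc; apply/setP => -[y|[i s]]; rewrite mem_Iset.
  by rewrite (mem_imset _ _ inl_inj) mem_Iset inE.
by rewrite /= (negbTE xc) andbF; apply/esym/imsetP => -[].
Qed.

Lemma base_part_ldo S : locating_dominatingb comb_rel S ->
  locating_dominating_off eg c (base_part S).
Proof.
case/andP => /forallP S_dom /forallP S_loc; split => [a ac | a b ac bc aS bS ab].
  by move: (S_dom (inl a)); rewrite Iset_comb_inl // imset_eq0.
move/forallP/(_ (inl b)): (S_loc (inl a)); rewrite !inE in aS bS.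
rewrite aS bS (inj_eq inl_inj) ab !Iset_comb_inl //.
by apply: contra => /eqP ->.
Qed.

Lemma comb_part_ge S : locating_dominatingb comb_rel S -> k.+1 <= #|comb_part S|.
Proof.
case/andP => /forallP S_dom _.
rewrite -{1}(card_ord k.+1) -cardsT; apply: leq_trans (leq_imset_card fst _).
apply/subset_leq_card/subsetP => i _; apply/imsetP.
have /set0Pn[t] := S_dom (tooth i).
rewrite /Iset /cnbhd onbhd_comb_tooth !inE => /andP[/orP[] /eqP -> tS].
  by exists (i, false); rewrite ?inE.
by exists (i, true); rewrite ?inE.
Qed.

Lemma gammaLD_comb m :
  (forall A, locating_dominating_off eg c A -> m <= #|A|) ->
  m + k.+1 <= gammaLD comb_rel.
Proof.
move=> base_ge; apply: gammaLD_ge => S S_ld.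
apply: leq_trans (card_comb_split S); apply: leq_add.
  exact/base_ge/base_part_ldo.
exact: comb_part_ge.
Qed.

End Comb.

Arguments comb_rel {G} eg c k.

Theorem comb_extensions (G : finType) (eg : rel G) (c : G) (m d : nat) (u v : G) :
  simple_graph eg -> connected_graph eg ->
  (forall x, #|onbhd eg x| + (x == c) <= 3) ->
  (forall A, locating_dominating_off eg c A -> m <= #|A|) -> #|G| < m.*2 ->
  open_twins eg d u v -> u != c -> v != c ->
  forall N, exists (T : finType) (e : rel T),
    simple_graph e /\ connected_graph e /\ subcubic e /\ N < #|T| /\
    (exists u v : T, open_twins e d u v) /\ #|T| < 2 * gammaLD e.
Proof.
move=> eg_simple eg_conn eg_deg base_ge small_base [uv [same_nbhd deg_u]] uc vc N.
have [eg_sym eg_irr] := eg_simple.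
have gamma_ge := gammaLD_comb N base_ge.
exists (comb_vertex G N), (comb_rel eg c N); rewrite card_comb.
split; first by split; [exact: comb_sym | exact: comb_irr].
split; first exact: comb_connected.
split; first exact: comb_subcubic.
split; first lia.
split; last lia.
exists (inl u), (inl v); rewrite /open_twins !onbhd_comb_inl (negbTE uc) (negbTE vc).
by rewrite !setU0 -same_nbhd card_imset //; exact: inl_inj.
Qed.

Definition p0 : 'I_3 := @Ordinal 3 0 isT.
Definition p1 : 'I_3 := @Ordinal 3 1 isT.
Definition p2 : 'I_3 := @Ordinal 3 2 isT.

Lemma ord3_cases x : x = p0 \/ x = p1 \/ x = p2.
Proof.
case: x => -[|[|[|//]]] lt; rewrite (bool_irrelevance lt isT).
all: by do ?[by left | right].
Qed.

Ltac case_p x := case: (ord3_cases x) => [->|[->|->]].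

Definition path3 : rel 'I_3 := fun x y => (x == p2) (+) (y == p2).

Lemma path3_simple : simple_graph path3.
Proof. by split => x; [move=> y; case_p x; case_p y | case_p x]. Qed.

Lemma path3_connected : connected_graph path3.
Proof.
apply: (connected_from_hub (c := p2)); first by move=> x y; case_p x; case_p y.
by move=> x; case_p x; [apply: connect1 | apply: connect1 | apply: connect0].
Qed.

Lemma onbhd_path3 x : onbhd path3 x = if x == p2 then [set p0; p1] else [set p2].
Proof. by apply/setP => y; case_p x; case_p y; rewrite !inE. Qed.

Lemma path3_deg x : #|onbhd path3 x| + (x == p2) <= 3.
Proof. by rewrite onbhd_path3; case_p x; rewrite ?cards1 ?cards2. Qed.

Lemma path3_ldo_ge A : locating_dominating_off path3 p2 A -> 2 <= #|A|.
Proof.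
move=> A_ld; rewrite (@card_set_count _ [:: p0; p1; p2]) // => [|x]; last by case_p x.
have twins : (p0 \in A) || (p1 \in A).
  by apply: (ldo_twins A_ld) => //; rewrite !onbhd_path3.
have dom0 : (p0 \in A) || (p2 \in A).
  by have [t] := ldo_dominated A_ld (a := p0) isT; case_p t => tA //=; rewrite tA ?orbT.
have dom1 : (p1 \in A) || (p2 \in A).
  by have [t] := ldo_dominated A_ld (a := p1) isT; case_p t => tA //=; rewrite tA ?orbT.
by move: twins dom0 dom1 => /=; case: (p0 \in A); case: (p1 \in A); case: (p2 \in A).
Qed.

Definition q0 : 'I_5 := @Ordinal 5 0 isT.
Definition q1 : 'I_5 := @Ordinal 5 1 isT.
Definition q2 : 'I_5 := @Ordinal 5 2 isT.
Definition q3 : 'I_5 := @Ordinal 5 3 isT.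
Definition q4 : 'I_5 := @Ordinal 5 4 isT.

Lemma ord5_cases x : x = q0 \/ x = q1 \/ x = q2 \/ x = q3 \/ x = q4.
Proof.
case: x => -[|[|[|[|[|//]]]]] lt; rewrite (bool_irrelevance lt isT).
all: by do ?[by left | right].
Qed.

Ltac case_q x := case: (ord5_cases x) => [->|[->|[->|[->|->]]]].

(* The 4-cycle q0 q2 q1 q3 with the pendant vertex q4 attached at q3. *)
Definition square_pendant : rel 'I_5 := fun x y =>
  match val x, val y with
  | 0, 2 | 2, 0 | 0, 3 | 3, 0 | 1, 2 | 2, 1 | 1, 3 | 3, 1 | 3, 4 | 4, 3 => true
  | _, _ => false
  end.

Lemma square_pendant_simple : simple_graph square_pendant.
Proof. by split => x; [move=> y; case_q x; case_q y | case_q x]. Qed.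

Lemma square_pendant_connected : connected_graph square_pendant.
Proof.
apply: (connected_from_hub (c := q3)); first by move=> x y; case_q x; case_q y.
move=> x; case_q x; rewrite ?connect0 //; try exact: connect1.
exact: connect_trans (connect1 (_ : square_pendant q3 q0)) (connect1 _).
Qed.

Lemma onbhd_square_pendant x : onbhd square_pendant x =
  match val x with
  | 0 | 1 => [set q2; q3]
  | 2 => [set q0; q1]
  | 3 => [set q0; q1; q4]
  | _ => [set q3]
  end.
Proof. by apply/setP => y; case_q x; case_q y; rewrite !inE. Qed.

Lemma square_pendant_deg x : #|onbhd square_pendant x| + (x == q2) <= 3.
Proof.
by case_q x; rewrite onbhd_square_pendant /= ?cards1 ?cards2 ?addn0 ?card_set3_le.
Qed.

Lemma square_pendant_ldo_ge A :
  locating_dominating_off square_pendant q2 A -> 3 <= #|A|.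
Proof.
move=> A_ld; rewrite (@card_set_count _ [:: q0; q1; q2; q3; q4]) // => [|x];
  last by case_q x.
have twins : (q0 \in A) || (q1 \in A).
  by apply: (ldo_twins A_ld) => //; rewrite !onbhd_square_pendant.
have dom0 : [|| q0 \in A, q2 \in A | q3 \in A].
  by have [t] := ldo_dominated A_ld (a := q0) isT; case_q t => tA //=; rewrite tA ?orbT.
have dom1 : [|| q1 \in A, q2 \in A | q3 \in A].
  by have [t] := ldo_dominated A_ld (a := q1) isT; case_q t => tA //=; rewrite tA ?orbT.
have dom4 : (q3 \in A) || (q4 \in A).
  by have [t] := ldo_dominated A_ld (a := q4) isT; case_q t => tA //=; rewrite tA ?orbT.
have sep04 : [|| q0 \in A, q4 \in A | q2 \in A].
  apply/norP => -[q0A /norP[q4A q2A]].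
  have [t] := ldo_separated A_ld (a := q0) (b := q4) isT isT isT q0A q4A.
  by case_q t; rewrite /= ?(negbTE q0A) ?(negbTE q4A) ?(negbTE q2A).
have sep14 : [|| q1 \in A, q4 \in A | q2 \in A].
  apply/norP => -[q1A /norP[q4A q2A]].
  have [t] := ldo_separated A_ld (a := q1) (b := q4) isT isT isT q1A q4A.
  by case_q t; rewrite /= ?(negbTE q1A) ?(negbTE q4A) ?(negbTE q2A).
move: twins dom0 dom1 dom4 sep04 sep14 => /=.
by case: (q0 \in A); case: (q1 \in A); case: (q2 \in A); case: (q3 \in A); case: (q4 \in A).
Qed.

Theorem proposition10 :
  (forall N : nat, exists (T : finType) (e : rel T),
     simple_graph e /\ connected_graph e /\ subcubic e /\
         N < #|T| /\
         (exists u v : T, open_twins e 1 u v) /\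
         #|T| < 2 * gammaLD e) /\
  (forall N : nat, exists (T : finType) (e : rel T),
     simple_graph e /\ connected_graph e /\ subcubic e /\
         N < #|T| /\
         (exists u v : T, open_twins e 2 u v) /\
         #|T| < 2 * gammaLD e).
Proof.
split.
- have twins : open_twins path3 1 p0 p1 by split; rewrite // !onbhd_path3 cards1.
  apply: (comb_extensions path3_simple path3_connected path3_deg path3_ldo_ge _ twins) => //.
  by rewrite card_ord.
- have twins : open_twins square_pendant 2 q0 q1.
    by split; rewrite // !onbhd_square_pendant cards2.
  apply: (comb_extensions square_pendant_simple square_pendant_connected
    square_pendant_deg square_pendant_ldo_ge _ twins) => //.
  by rewrite card_ord.
Qed.
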